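(* Let $E$ be an equation in the unknowns $x_1,\dots,x_n$. (1) $\mathcal S_E=0$ if and only if $E$ is trivial. (2) If $\mathcal S_E\ne0$ and $\mathcal S_E(\beta)=0$ for some $\beta\in\mathbb N_0^n$, then $(\beta)_i=0$ for at least two indices $i$.
   Context: An equation is a pair $E=(u,v)$ of words over $\{x_1,\dots,x_n\}$, trivial if $u=v$. For $E=(x_{i_1}\cdots x_{i_r},\,x_{j_1}\cdots x_{j_s})$ define $S_{E,x_j}=\sum_{a:\,i_a=j}\prod_{t=1}^{a-1}X_{i_t}-\sum_{a:\,j_a=j}\prod_{t=1}^{a-1}X_{j_t}\in\mathbb Z[X_1,\dots,X_n]$ (empty product $=1$), $\mathcal S_E=(S_{E,x_1},\dots,S_{E,x_n})$. For $\beta\in\mathbb N_0^n$ and a polynomial $p$, $p(\beta)\in\mathbb Z[x]$ is the image under $X_i\mapsto x^{(\beta)_i}$, and $\mathcal S_E(\beta)=(S_{E,x_1}(\beta),\dots,S_{E,x_n}(\beta))$. *)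

From HB Require Import structures.
From mathcomp Require Import all_boot all_order all_algebra.
Set Implicit Arguments. Unset Strict Implicit. Unset Printing Implicit Defensive.
Import Order.TTheory GRing.Theory Num.Theory.
Local Open Scope ring_scope.

(* Unknowns x_1..x_n are represented by 'I_n; a word is a seq 'I_n;
   an equation is a pair of words. *)
Definition word (n : nat) := seq 'I_n.
Definition equation (n : nat) := (word n * word n)%type.
Definition trivial_eq n (E : equation n) : bool := E.1 == E.2.

Definition monomial (n : nat) := {ffun 'I_n -> nat}.

(* A polynomial of Z[X_1..X_n] given as a formal integer combination of
   monomials (list of (coefficient, monomial) terms). *)
Definition mpoly (n : nat) := seq (int * monomial n).

Definition mcoef n (p : mpoly n) (m : monomial n) : int :=
  \sum_(t <- p | t.2 == m) t.1.

Definition mpoly_zero n (p : mpoly n) : Prop := forall m, mcoef p m = 0.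

(* Image under X_i |-> x^(beta i), in Z[x]. *)
Definition mpoly_eval n (p : mpoly n) (beta : 'I_n -> nat) : {poly int} :=
  \sum_(t <- p) t.1 *: 'X^(\sum_(i < n) t.2 i * beta i)%N.

Definition word_monomial n (w : word n) : monomial n :=
  [ffun i => count_mem i w].

(* Terms sum_{a : w_a = j} prod_{t<a} X_{w_t} (0-indexed positions a). *)
Definition side_terms n (w : word n) (j : 'I_n) : mpoly n :=
  [seq (1%:Z, word_monomial (take a w)) | a <- iota 0 (size w) & nth j w a == j].

Definition S_E n (E : equation n) (j : 'I_n) : mpoly n :=
  side_terms E.1 j ++ [seq (- t.1, t.2) | t <- side_terms E.2 j].

Definition SE_zero n (E : equation n) : Prop := forall j, mpoly_zero (S_E E j).

Definition SE_eval_zero n (E : equation n) (beta : 'I_n -> nat) : Prop :=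
  forall j, mpoly_eval (S_E E j) beta = 0.

From HB Require Import structures.
From mathcomp Require Import all_boot all_order all_algebra.
From mathcomp Require Import zify.

(* Substituting X_i |-> x^(beta i), every summand of S_{E,x_j} coming from a
   position a of a side becomes x^D, where D is the beta-weight of the prefix
   before a.  So the coefficient of x^D in S_{E,x_j}(beta) is the number of
   occurrences of x_j at prefix weight D on the left side minus that on the
   right side.  If the two sides differ, look at their longest common prefix p
   and the first letters a != b after it: the weight of p is attained by the
   occurrence of a on one side but by no occurrence of a on the other, as long
   as b has positive weight (and symmetrically).  This fails only if two
   unknowns have weight 0.  Taking beta = 1 gives (1). *)

Set Implicit Arguments.
Unset Strict Implicit.
Unset Printing Implicit Defensive.

Import GRing.Theory.

Lemma sum_mcoef_undup n (p : mpoly n) (P : pred (monomial n)) :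
  (\sum_(t <- p | P t.2) t.1 = \sum_(m <- undup (map snd p) | P m) mcoef p m)%R.
Proof.
rewrite (exchange_big_dep (fun t => P t.2)) /=; last by move=> m t Pm /eqP ->.
rewrite big_seq_cond [RHS]big_seq_cond; apply: eq_bigr => t /andP [tp Pt].
rewrite (eq_bigl (pred1 t.2)); last first.
  by move=> m /=; rewrite eq_sym; have [->|] := eqVneq m t.2; rewrite ?Pt ?andbF.
rewrite -big_filter filter_pred1_uniq ?undup_uniq ?big_seq1 //.
by rewrite mem_undup map_f.
Qed.

Lemma mpoly_zero_sum n (p : mpoly n) (P : pred (monomial n)) :
  mpoly_zero p -> (\sum_(t <- p | P t.2) t.1 = 0)%R.
Proof. by move=> p0; rewrite sum_mcoef_undup big1. Qed.

Lemma seq_diverge (T : eqType) (u v : seq T) : u != v ->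
  exists p a s t, ohead t != Some a /\
    (u = p ++ a :: s /\ v = p ++ t \/ v = p ++ a :: s /\ u = p ++ t).
Proof.
elim: u v => [|a u IHu] [|b v] //= uv.
- by exists [::], b, v, [::]; split=> //; right.
- by exists [::], a, u, [::]; split=> //; left.
move: uv; have [<- uv|ab _] := eqVneq a b; last first.
  by exists [::], a, u, (b :: v); split; [rewrite eq_sym | left].
have [|p [c [s [t [ct [[-> ->]|[-> ->]]]]]]] := IHu v; first by apply: contra_neq uv => ->.
- by exists (a :: p), c, s, t; split; [|left].
- by exists (a :: p), c, s, t; split; [|right].
Qed.

Section PrefixWeights.

Variables (n : nat) (beta : 'I_n -> nat).

Definition mono_deg (m : monomial n) : nat := \sum_(i < n) m i * beta i.
Definition word_deg (w : word n) : nat := sumn (map beta w).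

Lemma mono_deg_word w : mono_deg (word_monomial w) = word_deg w.
Proof.
rewrite /mono_deg /word_deg; elim: w => [|x w IHw] /=.
  by apply: big1 => i _; rewrite ffunE.
rewrite -IHw; under eq_bigr => i _ do rewrite !ffunE /= mulnDl.
rewrite big_split /= (bigD1 x) //= eqxx mul1n big1 ?addn0; last first.
  by move=> i; rewrite eq_sym => /negbTE ->.
by congr (_ + _); apply: eq_bigr => i _; rewrite ffunE.
Qed.

(* [occ d w j D] counts the occurrences of [j] in [w] whose prefix has weight
   [D], when the weight is accumulated starting from [d]. *)
Fixpoint occ (d : nat) (w : word n) (j : 'I_n) (D : nat) : nat :=
  if w is x :: w' then ((x == j) && (d == D)) + occ (d + beta x) w' j D else 0.

Lemma occ_cat d p w j D : occ d (p ++ w) j D = occ d p j D + occ (d + word_deg p) w j D.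
Proof.
elim: p d => [|x p IHp] d /=; first by rewrite addn0.
by rewrite IHp addnA /word_deg /= addnA.
Qed.

Lemma occ_small d w j D : D < d -> occ d w j D = 0.
Proof.
elim: w d => [|x w IHw] d //= Dd.
by rewrite IHw; [rewrite (gtn_eqF Dd) andbF | lia].
Qed.

Lemma count_occ d w j D :
  count (fun a => (nth j w a == j) && (d + word_deg (take a w) == D)) (iota 0 (size w))
  = occ d w j D.
Proof.
elim: w d => [|x w IHw] d //=.
rewrite addn0 -(IHw (d + beta x)) -[1]addn0 iotaDl count_map.
by congr (_ + _); apply: eq_count => a; rewrite /= /word_deg /= addnA.
Qed.

Lemma sum_side_terms_deg w j D :
  (\sum_(t <- side_terms w j | mono_deg t.2 == D) t.1 = (occ 0 w j D)%:Z)%R.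
Proof.
rewrite /side_terms big_map big_filter_cond -count_occ -sum1_count.
rewrite -[in RHS]natz natr_sum.
apply: eq_bigl => a /=.
by rewrite mono_deg_word add0n.
Qed.

Lemma sum_S_E_deg (E : equation n) j D :
  (\sum_(t <- S_E E j | mono_deg t.2 == D) t.1 = (occ 0 E.1 j D)%:Z - (occ 0 E.2 j D)%:Z)%R.
Proof. by rewrite /S_E big_cat sum_side_terms_deg big_map sumrN sum_side_terms_deg. Qed.

Lemma coef_mpoly_eval (p : mpoly n) D :
  ((mpoly_eval p beta)`_D = \sum_(t <- p | mono_deg t.2 == D) t.1)%R.
Proof.
rewrite coef_sum [RHS]big_mkcond; apply: eq_bigr => t _.
by rewrite coefZ coefXn eq_sym; case: (_ == _); rewrite ?mulr1 ?mulr0.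
Qed.

Lemma occ_lt_branch p a s t :
  occ (word_deg p) t a (word_deg p) = 0 ->
  occ 0 (p ++ t) a (word_deg p) < occ 0 (p ++ a :: s) a (word_deg p).
Proof. by move=> t0; rewrite !occ_cat add0n t0 /= !eqxx; lia. Qed.

Lemma occ_separates p a s t :
  ohead t != Some a -> (forall i1 i2, beta i1 = 0 -> beta i2 = 0 -> i1 = i2) ->
  exists j D, occ 0 (p ++ a :: s) j D != occ 0 (p ++ t) j D.
Proof.
have occ_head_other b c w : b != c -> 0 < beta b ->
    occ (word_deg p) (b :: w) c (word_deg p) = 0.
  by move=> /negbTE bc bpos; rewrite /= bc occ_small //; lia.
case: t => [|b t] ta zero_inj.
  by exists a, (word_deg p); rewrite gtn_eqF // occ_lt_branch.
have ba : b != a by apply: contra ta => /eqP ->.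
have [b0|bpos] := posnP (beta b); last first.
  by exists a, (word_deg p); rewrite gtn_eqF // occ_lt_branch // occ_head_other.
have apos : 0 < beta a.
  by rewrite lt0n; apply: contra ba => /eqP a0; rewrite (zero_inj _ _ a0 b0).
by exists b, (word_deg p); rewrite ltn_eqF // occ_lt_branch // occ_head_other // eq_sym.
Qed.

Lemma occ_inj u v : (forall i1 i2, beta i1 = 0 -> beta i2 = 0 -> i1 = i2) ->
  (forall j D, occ 0 u j D = occ 0 v j D) -> u = v.
Proof.
move=> zero_inj occ_uv; apply/eqP; apply: contraT => /seq_diverge.
move=> [p [a [s [t [ta uv]]]]]; have [j [D]] := occ_separates p s ta zero_inj.
by case: uv occ_uv => [[-> ->]|[-> ->]] occ_uv; rewrite occ_uv eqxx.
Qed.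

End PrefixWeights.

Lemma S_E_trivial n (E : equation n) : trivial_eq E -> SE_zero E.
Proof.
move=> /eqP E12 j m; rewrite /mcoef /S_E E12 big_cat.
by move: (side_terms E.2 j) => ts; rewrite big_map /= sumrN subrr.
Qed.

Lemma sum_S_E_deg_eq0_trivial n (beta : 'I_n -> nat) (E : equation n) :
  (forall i1 i2, beta i1 = 0 -> beta i2 = 0 -> i1 = i2) ->
  (forall j D, \sum_(t <- S_E E j | mono_deg beta t.2 == D) t.1 = 0)%R -> trivial_eq E.
Proof.
move=> zero_inj S_E0; apply/eqP/(occ_inj zero_inj) => j D.
by apply/eqP; rewrite -eqz_nat -subr_eq0 -sum_S_E_deg S_E0.
Qed.

Theorem lemma3p1 (n : nat) (E : equation n) :
  (SE_zero E <-> trivial_eq E) /\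
  (forall beta : 'I_n -> nat,
      ~ SE_zero E -> SE_eval_zero E beta ->
      exists i1 i2 : 'I_n, i1 <> i2 /\ beta i1 = 0%N /\ beta i2 = 0%N).
Proof.
split; [split|].
- move=> S_E0; apply: (@sum_S_E_deg_eq0_trivial _ (fun=> 1%N)) => [//|j D].
  exact: (@mpoly_zero_sum _ _ (fun m => mono_deg _ m == D) (S_E0 j)).
- exact: S_E_trivial.
move=> beta S_Enz S_E_beta0.
have [/card_gt1P [i1 [i2 [z1 z2 i12]]]|le1] := ltnP 1 #|[pred i | beta i == 0%N]|.
  by move: z1 z2; rewrite !inE => /eqP z1 /eqP z2; exists i1, i2; split; [exact/eqP|].
case: S_Enz; apply: S_E_trivial; apply: (@sum_S_E_deg_eq0_trivial _ beta) => [i1 i2 z1 z2|j D].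
  by apply: (card_le1_eqP le1); rewrite inE; apply/eqP.
by rewrite -coef_mpoly_eval S_E_beta0 coef0.
Qed.
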